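(* Let $X$ be a Banach space, $A=(a_{nk})_{n,k\in\mathbb{N}}$ a positive regular matrix, $B$ a subset of $B_{X^{*}}$ that (I)-generates $B_{X^{*}}$, and $\mathbf{p}=(p_k)_{k\in\mathbb{N}}$ a sequence of real numbers with $\inf_k p_k>0$ and $\sup_k p_k<\infty$. Then a bounded sequence $(x_k)_{k\in\mathbb{N}}$ in $X$ is such that $(x^{*}(x_k))_{k}$ is strongly $A$-$\mathbf{p}$-convergent to $x^{*}(x)$ for every $x^{*}\in X^{*}$ if and only if $(x^{*}(x_k))_{k}$ is strongly $A$-$\mathbf{p}$-convergent to $x^{*}(x)$ for every $x^{*}\in B$ (here $x\in X$). The same statement holds with strong $A$-$\mathbf{p}$-convergence replaced by $A$-statistical convergence.
   Context: A complex matrix $A=(a_{nk})$ is regular if $\sup_n\sum_k|a_{nk}|<\infty$, $\lim_n\sum_k a_{nk}=1$ and $\lim_n a_{nk}=0$ for all $k$; positive means $a_{nk}\geq0$. A scalar sequence $(s_k)$ is strongly $A$-$\mathbf{p}$-convergent to $s$ if $\sum_k a_{nk}|s_k-s|^{p_k}<\infty$ for every $n$ and $\lim_{n\to\infty}\sum_k a_{nk}|s_k-s|^{p_k}=0$. It is $A$-statistically convergent to $s$ if for every $\varepsilon>0$, $\lim_{n\to\infty}\sum_k a_{nk}\chi_{B_\varepsilon}(k)=0$ where $B_\varepsilon=\{k:|s_k-s|\geq\varepsilon\}$. A subset $B\subseteq B_{X^*}$ (I)-generates $B_{X^*}$ if whenever $B=\bigcup_{n=1}^\infty B_n$, $B_{X^*}$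 equals the norm-closure of the convex hull of $\bigcup_n\overline{\mathrm{co}}^{w^*}(B_n)$ (weak*-closed convex hulls). *)

From HB Require Import structures.
From mathcomp Require Import all_boot all_order all_algebra.
From mathcomp Require Import all_classical all_reals all_analysis.
From mathcomp Require Export complex.
Set Implicit Arguments. Unset Strict Implicit. Unset Printing Implicit Defensive.
Import Order.TTheory GRing.Theory Num.Theory.
Import numFieldNormedType.Exports.
Local Open Scope classical_set_scope.
Local Open Scope ring_scope.

Section DualSpace.
Variables (K : numFieldType) (X : normedModType K).

Definition dual : set (X -> K) :=
  [set f | (forall (a : K) (x y : X), f (a *: x + y) = a * f x + f y)
           /\ continuous f].

Definition dual_ball : set (X -> K) :=
  [set f | dual f /\ forall x : X, `|f x| <= `|x|].

(* convex hull: finite convex combinations (nonnegative, hence real, weights) *)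
Definition conv_hull (S : set (X -> K)) : set (X -> K) :=
  [set f | exists (m : nat) (g : 'I_m -> X -> K) (l : 'I_m -> K),
     [/\ forall i, S (g i), forall i, 0 <= l i, \sum_(i < m) l i = 1
       & forall x, f x = \sum_(i < m) l i * g i x]].

(* closure in X^* for the weak* topology sigma(X^*, X) *)
Definition wstar_closure (S : set (X -> K)) : set (X -> K) :=
  [set f | dual f /\ forall (m : nat) (xs : 'I_m -> X) (e : K), 0 < e ->
     exists g, S g /\ forall i, `|f (xs i) - g (xs i)| < e].

Definition wstar_cconv_hull (S : set (X -> K)) : set (X -> K) :=
  wstar_closure (conv_hull S).

(* closure in X^* for the dual norm: ||f - g|| <= e iff |f x - g x| <= e ||x|| *)
Definition norm_closure (S : set (X -> K)) : set (X -> K) :=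
  [set f | dual f /\ forall e : K, 0 < e ->
     exists g, S g /\ forall x : X, `|f x - g x| <= e * `|x|].

Definition I_generates (B : set (X -> K)) : Prop :=
  forall Bn : nat -> set (X -> K), B = \bigcup_n Bn n ->
    dual_ball = norm_closure (conv_hull (\bigcup_n wstar_cconv_hull (Bn n))).

End DualSpace.
Arguments dual {K} X.
Arguments dual_ball {K} X.

Section Summability.
Variable R : realType.

Definition positive_matrix (A : nat -> nat -> R) : Prop :=
  forall n k, 0 <= A n k.

Definition regular (A : nat -> nat -> R) : Prop :=
  [/\ exists M : R, forall n N, \sum_(k < N) `|A n k| <= M,
      (fun n => limn (series (A n))) @ \oo --> (1 : R)
    & forall k, (fun n => A n k) @ \oo --> (0 : R)].

Local Open Scope ereal_scope.

(* Strong A-p-convergence of s : nat -> K to l, with modulus nrm : K -> R.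
   The series have nonnegative terms when A is positive (the only case used). *)
Definition strong_Ap_cvg (K : zmodType) (nrm : K -> R)
    (A : nat -> nat -> R) (p : nat -> R) (s : nat -> K) (l : K) : Prop :=
  let T := fun n => \sum_(k <oo) ((A n k * (nrm (s k - l)%R) `^ (p k))%R)%:E in
  (forall n, T n < +oo) /\ T @ \oo --> 0.

Definition A_stat_cvg (K : zmodType) (nrm : K -> R)
    (A : nat -> nat -> R) (s : nat -> K) (l : K) : Prop :=
  forall eps : R, (0 < eps)%R ->
    (fun n => \sum_(k <oo)
        ((A n k * \1_[set j | eps <= nrm (s j - l)]%R k)%R)%:E) @ \oo --> 0.

End Summability.

(* For a bounded nonnegative sequence t and exponents p_k in [c, C] with c > 0, the
   conditions sum_k a_nk t_k^(p_k) -> 0, sum_k a_nk t_k -> 0 and "t tends A-statistically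
   to 0" are equivalent: split each sum at the level t_k = d and use that the row sums of
   A are bounded.  Both halves of the theorem thus reduce to the case p = 1 for
   t_k = |f(x_k) - f(x)|.
   For fixed m and eps, the functionals g with sum_(k<N) a_nk |g(x_k) - g(x)| <= eps for
   all n >= m and all N form a convex weak*-closed set, increasing in m, so their union
   is convex.  If the means vanish on B, then B is the union of its parts B_m lying in the
   m-th set, and (I)-generation makes every functional of the unit ball a norm limit of
   elements of that union; since (x_k) is bounded, norm-close functionals have close
   means.  Scaling passes from the unit ball to all of X^*. *)

From HB Require Import structures.
From mathcomp Require Import all_boot all_order all_algebra.
From mathcomp Require Import all_classical all_reals all_analysis.
From mathcomp Require Import complex.
From mathcomp Require Import ring.
Import Order.TTheory GRing.Theory Num.Theory Num.Def.
Import numFieldNormedType.Exports.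

Set Implicit Arguments.
Unset Strict Implicit.
Unset Printing Implicit Defensive.

Local Open Scope classical_set_scope.
Local Open Scope ring_scope.

Lemma mul_div_add1_le (R : realFieldType) (e a : R) :
  0 <= e -> 0 <= a -> e / (a + 1) * a <= e.
Proof.
move=> e0 a0; rewrite mulrAC ler_pdivrMr ?ltr_wpDl //.
by rewrite ler_wpM2l // lerDl.
Qed.

Section NonnegSeries.
Variable R : realType.
Implicit Types (u : nat -> R) (T : nat -> \bar R).
Local Open Scope ereal_scope.

Lemma nneseriesEFin_le u (e : R) :
  (forall k, 0 <= u k)%R -> (forall N, \sum_(k < N) u k <= e)%R ->
  \sum_(k <oo) (u k)%:E <= e%:E.
Proof.
move=> u0 ue; apply: lime_le.
  by apply: is_cvg_nneseries => k _; rewrite lee_fin.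
by apply: nearW => N; rewrite /= sumEFin big_mkord lee_fin.
Qed.

Lemma psum_le_nneseriesEFin u N :
  (forall k, 0 <= u k)%R -> (\sum_(k < N) u k)%:E <= \sum_(k <oo) (u k)%:E.
Proof.
move=> u0; have := @nneseries_lim_ge R (fun k => (u k)%:E) xpredT 0 N.
by rewrite big_mkord sumEFin; apply=> k _ _; rewrite lee_fin.
Qed.

Lemma psum_le_of_nneseriesEFin_le u N (e : R) :
  (forall k, 0 <= u k)%R -> \sum_(k <oo) (u k)%:E <= e%:E ->
  (\sum_(k < N) u k <= e)%R.
Proof. by move=> u0 ue; rewrite -lee_fin (le_trans _ ue) ?psum_le_nneseriesEFin. Qed.

Definition eventually_small T :=
  forall e : R, (0 < e)%R -> \forall n \near \oo, T n <= e%:E.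

Lemma cvg0_eventually_small T :
  (forall n, 0 <= T n) -> T @ \oo --> 0 <-> eventually_small T.
Proof.
move=> T0; split.
  move/fine_cvgP => [Tfin /cvgrPdist_le Tcvg] e e0.
  apply: filterS2 Tfin (Tcvg e e0) => n Tn.
  rewrite sub0r normrN /= => Te.
  by rewrite -(fineK Tn) lee_fin (le_trans (ler_norm _)).
move=> Tsmall; have Tfin : \forall n \near \oo, T n \is a fin_num.
  apply: filterS (Tsmall 1%R ltr01) => n Tn.
  by rewrite ge0_fin_numE // (le_lt_trans Tn) ?ltry.
apply/fine_cvgP; split => //; apply/cvgrPdist_le => e e0.
apply: filterS2 Tfin (Tsmall e e0) => n Tn Te.
by rewrite sub0r normrN /= ger0_norm ?fine_ge0 // -lee_fin fineK.
Qed.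

End NonnegSeries.

Section PowerBounds.
Variable R : realType.

Lemma powR_le_shift (t L p C : R) :
  0 <= t <= L -> 0 <= p <= C -> t `^ p <= (1 + L) `^ C.
Proof.
move=> /andP[t0 tL] /andP[p0 pC].
have L0 : 0 <= L := le_trans t0 tL.
apply: (@le_trans _ _ ((1 + L) `^ p)).
  by apply: ge0_ler_powR; rewrite ?nnegrE ?addr_ge0 // (le_trans tL) ?lerDr.
by apply: (ler_powR _ pC); rewrite lerDl.
Qed.

Lemma powR_le_small_add_large (t L d c p C : R) :
  0 <= t <= L -> 0 < d <= 1 -> 0 <= c <= p -> p <= C ->
  t `^ p <= d `^ c + (1 + L) `^ C * ((d <= t)%R)%:R.
Proof.
move=> tL /andP[d0 d1] /andP[c0 cp] pC.
have p0 := le_trans c0 cp; have /andP[t0 _] := tL.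
have [dt|td] := lerP d t.
  have p0C : 0 <= p <= C by rewrite p0 pC.
  by rewrite mulr1 (le_trans (powR_le_shift tL p0C)) // lerDr powR_ge0.
rewrite mulr0 addr0 (@le_trans _ _ (d `^ p)) //.
  by apply: ge0_ler_powR; rewrite ?nnegrE ?(ltW d0) ?(ltW td).
by apply: (ger_powR _ cp); rewrite d0 d1.
Qed.

(* Markov's inequality for a single term. *)
Lemma indic_le_powR (t e p C : R) :
  0 <= t -> 0 < e -> 0 <= p <= C -> ((e <= t)%R)%:R <= t `^ p / (minr e 1) `^ C.
Proof.
move=> t0 e0 /andP[p0 pC].
have m0 : 0 < minr e 1 by rewrite lt_min e0 ltr01.
have [et|_] := lerP e t; last by rewrite divr_ge0 ?powR_ge0.
rewrite ler_pdivlMr ?powR_gt0 // mul1r (@le_trans _ _ ((minr e 1) `^ p)) //.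
  by apply: (ger_powR _ pC); rewrite m0 ge_min lexx orbT.
by apply: ge0_ler_powR; rewrite ?nnegrE ?(ltW m0) // ge_min et.
Qed.

Lemma indic_geE (t : nat -> R) (e : R) k :
  \1_[set j | e <= t j] k = ((e <= t k)%R)%:R :> R.
Proof.
rewrite indicE; have [et|et] := boolP (e <= t k); first by rewrite mem_set.
by rewrite memNset // => et'; rewrite et' in et.
Qed.

Lemma indic_ge0 (T : Type) (S : set T) x : 0 <= \1_S x :> R.
Proof. by rewrite indicE ler0n. Qed.

End PowerBounds.

Section Densities.
Variables (R : realType) (A : nat -> nat -> R) (M : R).
Hypothesis A_ge0 : forall n k, 0 <= A n k.
Hypothesis sumA_le : forall n N, \sum_(k < N) A n k <= M.
Implicit Types (p t : nat -> R).

Definition power_mean p t n : \bar R := (\sum_(k <oo) (A n k * t k `^ p k)%:E)%E.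
Definition mean t n : \bar R := (\sum_(k <oo) (A n k * t k)%:E)%E.
Definition density t e n : \bar R :=
  (\sum_(k <oo) (A n k * \1_[set j | e <= t j] k)%:E)%E.
Definition stat_null t := forall e, 0 < e -> eventually_small (density t e).

Let M_ge0 : 0 <= M.
Proof. by rewrite (le_trans _ (sumA_le 0 0)) // big_ord0. Qed.

Lemma power_mean_lt_pinfty p t (L C : R) :
  (forall k, 0 <= t k <= L) -> (forall k, 0 <= p k <= C) ->
  forall n, (power_mean p t n < +oo)%E.
Proof.
move=> tL pC n; apply: (le_lt_trans _ (ltry (M * (1 + L) `^ C))).
apply: nneseriesEFin_le => [k|N]; first by rewrite mulr_ge0 ?powR_ge0.
apply: (@le_trans _ _ (\sum_(k < N) A n k * (1 + L) `^ C)).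
  by apply: ler_sum => k _; rewrite ler_wpM2l ?powR_le_shift.
by rewrite -mulr_suml ler_wpM2r ?powR_ge0.
Qed.

Lemma power_mean_small_of_stat_null p t (L c C : R) :
  (forall k, 0 <= t k <= L) -> 0 < c -> (forall k, c <= p k <= C) ->
  stat_null t -> eventually_small (power_mean p t).
Proof.
move=> tL c0 pcC tnull e e0.
set eps := e / 2; have eps0 : 0 < eps by rewrite divr_gt0.
set Lp := (1 + L) `^ C; have Lp0 : 0 <= Lp := powR_ge0 _ _.
set q := eps / (M + 1); have q0 : 0 < q by rewrite divr_gt0 ?ltr_wpDl.
set d := minr 1 (q `^ c^-1).
have d0 : 0 < d by rewrite lt_min ltr01 powR_gt0.
have d1 : d <= 1 by rewrite ge_min lexx.
have dc : d `^ c <= q.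
  rewrite (@le_trans _ _ ((q `^ c^-1) `^ c)) //.
    by apply: ge0_ler_powR; rewrite ?nnegrE ?(ltW c0) ?(ltW d0) ?powR_ge0 // ge_min lexx orbT.
  by rewrite -powRrM mulVf ?gt_eqF // powRr1 ?(ltW q0).
have := tnull d d0 (eps / (Lp + 1)) (divr_gt0 eps0 (ltr_wpDl Lp0 ltr01)).
apply: filterS => n dens.
apply: nneseriesEFin_le => [k|N]; first by rewrite mulr_ge0 ?powR_ge0.
have densN := psum_le_of_nneseriesEFin_le N
  (fun k => mulr_ge0 (A_ge0 n k) (indic_ge0 _ _ _)) dens.
apply: (@le_trans _ _ (\sum_(k < N)
    (d `^ c * A n k + Lp * (A n k * \1_[set j | d <= t j] k)))).
  apply: ler_sum => k _; have /andP[cp pC] := pcC k.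
  rewrite indic_geE mulrCA [d `^ c * _]mulrC -mulrDr ler_wpM2l //.
  by apply: powR_le_small_add_large; rewrite ?d0 ?d1 ?(ltW c0).
rewrite big_split /= -!mulr_sumr [e]splitr lerD //.
  rewrite (@le_trans _ _ (q * M)) //.
    by apply: ler_pM; rewrite ?powR_ge0 ?sumr_ge0 ?sumA_le.
  exact: mul_div_add1_le (ltW eps0) M_ge0.
rewrite (@le_trans _ _ (Lp * (eps / (Lp + 1)))) ?ler_wpM2l //.
by rewrite mulrC mul_div_add1_le ?(ltW eps0).
Qed.

Lemma stat_null_of_power_mean_small p t (C : R) :
  (forall k, 0 <= t k) -> (forall k, 0 <= p k <= C) ->
  eventually_small (power_mean p t) -> stat_null t.
Proof.
move=> t0 pC tsmall e e0 e' e'0.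
have m0 : 0 < minr e 1 by rewrite lt_min e0 ltr01.
set q := (minr e 1) `^ C; have q0 : 0 < q by apply: powR_gt0.
apply: filterS (tsmall (e' * q) (mulr_gt0 e'0 q0)) => n tn.
apply: nneseriesEFin_le => [k|N]; first by rewrite mulr_ge0 ?indic_ge0.
have tN := psum_le_of_nneseriesEFin_le N
  (fun k => mulr_ge0 (A_ge0 n k) (powR_ge0 (t k) (p k))) tn.
apply: (@le_trans _ _ (\sum_(k < N) A n k * (t k `^ p k / q))).
  by apply: ler_sum => k _; rewrite indic_geE ler_wpM2l ?indic_le_powR.
by under eq_bigr do rewrite mulrA; rewrite -mulr_suml ler_pdivrMr.
Qed.

Lemma power_mean_smallE p t (L c C : R) :
  (forall k, 0 <= t k <= L) -> 0 < c -> (forall k, c <= p k <= C) ->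
  eventually_small (power_mean p t) <-> stat_null t.
Proof.
move=> tL c0 pcC; split; last exact: power_mean_small_of_stat_null tL c0 pcC.
apply: (stat_null_of_power_mean_small (C := C)).
  by move=> k; have /andP[] := tL k.
by move=> k; have /andP[cp ->] := pcC k; rewrite (le_trans (ltW c0) cp).
Qed.

Lemma mean_smallE t (L : R) :
  (forall k, 0 <= t k <= L) -> eventually_small (mean t) <-> stat_null t.
Proof.
move=> tL; have -> : mean t = power_mean (fun=> 1) t.
  apply/funext => n; apply: eq_eseriesr => k _.
  by rewrite powRr1 //; have /andP[] := tL k.
by apply: (power_mean_smallE (C := 1) tL ltr01) => k; rewrite lexx.
Qed.

Lemma stat_null_scale t (a : R) : 0 < a -> stat_null t -> stat_null (fun k => a * t k).
Proof.
move=> a0 tnull e e0; have -> : density (fun k => a * t k) e = density t (e / a).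
  apply/funext => n; apply: eq_eseriesr => k _.
  by rewrite !indic_geE ler_pdivrMr // [t k * a]mulrC.
exact/tnull/divr_gt0.
Qed.

Lemma strong_Ap_cvgE (K : zmodType) (nrm : K -> R) p s l (L c C : R) :
  (forall k, 0 <= nrm (s k - l) <= L) -> 0 < c -> (forall k, c <= p k <= C) ->
  strong_Ap_cvg nrm A p s l <-> stat_null (fun k => nrm (s k - l)).
Proof.
move=> tL c0 pcC; rewrite -(power_mean_smallE tL c0 pcC).
have pC k : 0 <= p k <= C.
  by have /andP[cp ->] := pcC k; rewrite (le_trans (ltW c0) cp).
have T0 n : (0 <= power_mean p (fun k => nrm (s k - l)%R) n)%E.
  by apply: nneseries_ge0 => k _; rewrite lee_fin mulr_ge0 ?powR_ge0.
split=> [[_ /(cvg0_eventually_small T0)] //|tsmall].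
by split; [exact: power_mean_lt_pinfty tL pC | exact/(cvg0_eventually_small T0)].
Qed.

Lemma A_stat_cvgE (K : zmodType) (nrm : K -> R) s l :
  A_stat_cvg nrm A s l <-> stat_null (fun k => nrm (s k - l)).
Proof.
have dens_ge0 e n : (0 <= density (fun k => nrm (s k - l)%R) e n)%E.
  by apply: nneseries_ge0 => k _; rewrite lee_fin mulr_ge0 ?indic_ge0.
split=> snull e e0.
  by apply/(cvg0_eventually_small (dens_ge0 e)); exact: snull.
by apply/(cvg0_eventually_small (dens_ge0 e)); exact: snull.
Qed.

End Densities.

Lemma regular_row_sum_le (R : realType) (A : nat -> nat -> R) :
  positive_matrix A -> regular A -> exists M, forall n N, \sum_(k < N) A n k <= M.
Proof.
move=> A0 [[M AM] _ _]; exists M => n N; rewrite (le_trans _ (AM n N)) //.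
by apply: ler_sum => k _; rewrite ger0_norm.
Qed.

Section Dual.
Variables (K : numFieldType) (X : normedModType K).
Implicit Types (f : X -> K) (S T : set (X -> K)).

Lemma conv_hullS S T : S `<=` T -> conv_hull S `<=` conv_hull T.
Proof.
by move=> ST f [m [g [l [gS l0 l1 fE]]]]; exists m, g, l; split=> // i; apply: ST.
Qed.

Lemma wstar_closureS S T : S `<=` T -> wstar_closure S `<=` wstar_closure T.
Proof.
move=> ST f [fd fcl]; split=> // m xs e e0.
by have [g [gS fg]] := fcl m xs e e0; exists g; split=> //; apply: ST.
Qed.

Lemma dual0 f : dual X f -> f 0 = 0.
Proof.
move=> [fl _]; have := fl 1 0 0; rewrite scaler0 addr0 mul1r => f0.
by apply: (addrI (f 0)); rewrite addr0 -f0.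
Qed.

Lemma dualZ f a y : dual X f -> f (a *: y) = a * f y.
Proof. by move=> fd; have [fl _] := fd; rewrite -[a *: y]addr0 fl dual0 ?addr0. Qed.

Lemma dual_bounded f : dual X f -> exists k, 0 < k /\ forall y, `|f y| <= k * `|y|.
Proof.
move=> fd; have [_ fc] := fd; have f0 := dual0 fd.
have /cvgrPdist_lt /(_ 1 ltr01) /nbhs_norm0P [d /= d0 fd1] := fc 0.
exists (2 / d); split=> [|y]; first by rewrite divr_gt0.
have [->|y0] := eqVneq y 0; first by rewrite f0 !normr0 mulr0.
have ny0 : 0 < `|y| by rewrite normr_gt0.
set a := d / (2 * `|y|); have a0 : 0 < a by rewrite divr_gt0 ?mulr_gt0.
have : a * `|f y| < 1.
  have := fd1 (a *: y); rewrite /= f0 sub0r normrN (dualZ _ _ fd) normrM gtr0_norm //.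
  apply; rewrite normrZ gtr0_norm //.
  have -> : a * `|y| = d / 2 by rewrite /a; field; rewrite gt_eqF.
  by rewrite ltr_pdivrMr // ltr_pMr // ltr1n.
have -> : 2 / d * `|y| = a^-1 by rewrite /a; field; rewrite ?gt_eqF.
by move=> afy; rewrite -(ler_pM2l a0) mulfV ?gt_eqF // ltW.
Qed.

Lemma dual_ball_scale f k :
  dual X f -> 0 < k -> (forall y, `|f y| <= k * `|y|) -> dual_ball X (fun y => k^-1 * f y).
Proof.
move=> [fl fc] k0 fk; split; first split.
- by move=> a y z; rewrite fl mulrDr mulrCA.
- by move=> y; apply: (@continuousM K X (fun=> k^-1) f y); [exact: cst_continuous|exact: fc].
- by move=> y; rewrite normrM gtr0_norm ?invr_gt0 // ler_pdivrMl // fk.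
Qed.

End Dual.

(* K is R or R[i]; the real modulus nrm is the norm of K read back in R through the
   order embedding emb. *)
Section NormEmbedding.
Variables (R : realType) (K : numFieldType) (emb : {rmorphism R -> K}) (nrm : K -> R).
Hypothesis ler_emb : forall a b, (emb a <= emb b) = (a <= b).
Hypothesis normr_emb : forall u, `|u| = emb (nrm u).

Lemma ltr_emb a b : (emb a < emb b) = (a < b).
Proof. by rewrite !lt_def ler_emb (inj_eq (fmorph_inj emb)). Qed.

Lemma emb_gt0 r : 0 < r -> 0 < emb r.
Proof. by rewrite -(rmorph0 emb) ltr_emb. Qed.

Lemma nrm_ge0 u : 0 <= nrm u.
Proof. by rewrite -ler_emb rmorph0 -normr_emb. Qed.

Lemma nrm_gt0 u : 0 < `|u| -> 0 < nrm u.
Proof. by rewrite normr_emb -(rmorph0 emb) ltr_emb. Qed.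

Lemma nrm_le u v : `|u| <= `|v| -> nrm u <= nrm v.
Proof. by rewrite !normr_emb ler_emb. Qed.

Lemma nrmD u v : nrm (u + v) <= nrm u + nrm v.
Proof. by rewrite -ler_emb rmorphD -!normr_emb ler_normD. Qed.

Lemma nrmB u v : nrm (u - v) <= nrm u + nrm v.
Proof. by rewrite -ler_emb rmorphD -!normr_emb ler_normB. Qed.

Lemma nrmM u v : nrm (u * v) = nrm u * nrm v.
Proof. by apply: (fmorph_inj emb); rewrite rmorphM -!normr_emb normrM. Qed.

Lemma nrm_emb r : 0 <= r -> nrm (emb r) = r.
Proof.
move=> r0; apply: (fmorph_inj emb).
by rewrite -normr_emb ger0_norm // -(rmorph0 emb) ler_emb.
Qed.

Lemma nrm_sum_ge0 m (l : 'I_m -> K) :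
  (forall i, 0 <= l i) -> nrm (\sum_(i < m) l i) = \sum_(i < m) nrm (l i).
Proof.
move=> l0; apply: (fmorph_inj emb); rewrite rmorph_sum -normr_emb ger0_norm ?sumr_ge0 //.
by apply: eq_bigr => i _; rewrite -normr_emb ger0_norm.
Qed.

Lemma nrm_sum_le m (l : 'I_m -> K) : nrm (\sum_(i < m) l i) <= \sum_(i < m) nrm (l i).
Proof.
rewrite -ler_emb rmorph_sum -normr_emb (le_trans (ler_norm_sum _ _ _)) //.
by under eq_bigr do rewrite normr_emb.
Qed.

Lemma dual_diff_bounded (X : normedModType K) (f : X -> K) (xs : nat -> X) x (Mx : K) :
  dual X f -> (forall k, `|xs k| <= Mx) ->
  exists L, forall k, 0 <= nrm (f (xs k) - f x) <= L.
Proof.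
move=> fd xsM; have [kap [kap0 fkap]] := dual_bounded fd.
have nrmf y : nrm (f y) <= nrm kap * nrm `|y|.
  by rewrite -nrmM; apply: nrm_le; rewrite normrM normr_id gtr0_norm.
exists (nrm kap * nrm Mx + nrm kap * nrm `|x|) => k.
rewrite nrm_ge0 (le_trans (nrmB _ _)) // lerD // (le_trans (nrmf _)) //.
have Mx0 : 0 <= Mx := le_trans (normr_ge0 _) (xsM 0).
by rewrite ler_wpM2l ?nrm_ge0 // nrm_le // normr_id ger0_norm.
Qed.

Section MeanSublevel.
Variables (X : normedModType K) (A : nat -> nat -> R) (M : R) (xs : nat -> X) (x : X).
Hypothesis A_ge0 : forall n k, 0 <= A n k.
Hypothesis sumA_le : forall n N, \sum_(k < N) A n k <= M.

Let M_ge0 : 0 <= M.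
Proof. by rewrite (le_trans _ (sumA_le 0 0)) // big_ord0. Qed.

Definition partial_mean (g : X -> K) n N := \sum_(k < N) A n k * nrm (g (xs k) - g x).

Definition mean_sublevel m (eps : R) : set (X -> K) :=
  [set g | forall n, (m <= n)%N -> forall N, partial_mean g n N <= eps].

Lemma conv_hull_mean_sublevel m (eps : R) :
  conv_hull (mean_sublevel m eps) `<=` mean_sublevel m eps.
Proof.
move=> f [j [g [l [gS l0 l1 fE]]]] n mn N.
have fdiff k : nrm (f (xs k) - f x) <= \sum_(i < j) nrm (l i) * nrm (g i (xs k) - g i x).
  rewrite !fE -sumrB (le_trans (nrm_sum_le _)) //.
  by apply: ler_sum => i _; rewrite -mulrBr nrmM.
apply: (@le_trans _ _ (\sum_(k < N) \sum_(i < j)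
    nrm (l i) * (A n k * nrm (g i (xs k) - g i x)))).
  apply: ler_sum => k _; rewrite (le_trans (ler_wpM2l (A_ge0 n k) (fdiff k))) //.
  by rewrite mulr_sumr; under eq_bigr do rewrite mulrCA.
rewrite exchange_big /= (@le_trans _ _ (\sum_(i < j) nrm (l i) * eps)) //.
  by apply: ler_sum => i _; rewrite -mulr_sumr ler_wpM2l ?nrm_ge0 //; exact: gS.
by rewrite -mulr_suml -nrm_sum_ge0 // l1 -(rmorph1 emb) nrm_emb // mul1r.
Qed.

Lemma conv_hull_bigcup_mean_sublevel (eps : R) :
  conv_hull (\bigcup_m mean_sublevel m eps) `<=` \bigcup_m mean_sublevel m eps.
Proof.
move=> f [j [g [l [gS l0 l1 fE]]]].
have /choice [m gm] : forall i : 'I_j, exists m, mean_sublevel m eps (g i).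
  by move=> i; have [m _ gm] := gS i; exists m.
exists (\max_(i < j) m i) => //; apply: conv_hull_mean_sublevel.
exists j, g, l; split=> // i n mn; apply: gm.
exact: leq_trans (leq_bigmax i) mn.
Qed.

Lemma partial_mean_perturb (f g : X -> K) (a b : R) n N :
  0 <= a -> (forall k, (k < N)%N -> nrm (f (xs k) - g (xs k)) <= a) ->
  nrm (f x - g x) <= b ->
  partial_mean f n N <= partial_mean g n N + (a + b) * M.
Proof.
move=> a0 fga fgb; have b0 : 0 <= b := le_trans (nrm_ge0 _) fgb.
apply: (@le_trans _ _ (\sum_(k < N) (A n k * nrm (g (xs k) - g x) + (a + b) * A n k))).
  apply: ler_sum => k _; rewrite [_ * A n k]mulrC -mulrDr ler_wpM2l //.
  have -> : f (xs k) - f x = (g (xs k) - g x) + ((f (xs k) - g (xs k)) - (f x - g x)).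
    by ring.
  by rewrite (le_trans (nrmD _ _)) // lerD2l (le_trans (nrmB _ _)) // lerD ?fga.
by rewrite big_split /= -mulr_sumr lerD2l ler_wpM2l ?addr_ge0 ?sumA_le.
Qed.

Lemma wstar_closure_mean_sublevel m (eps : R) :
  wstar_closure (mean_sublevel m eps) `<=` mean_sublevel m eps.
Proof.
move=> f [_ fcl] n mn N; apply/ler_addgt0Pr => e e0.
set d := e / (M + 1) / 2; have d0 : 0 < d by rewrite !divr_gt0 ?ltr_wpDl.
pose pts (i : 'I_N.+1) := if (i < N)%N then xs i else x.
have [g [gS fg]] := fcl N.+1 pts (emb d) (emb_gt0 d0).
have fg_pts i : nrm (f (pts i) - g (pts i)) <= d.
  by rewrite -(nrm_emb (ltW d0)) nrm_le // (gtr0_norm (emb_gt0 d0)) ltW.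
have fgk k : (k < N)%N -> nrm (f (xs k) - g (xs k)) <= d.
  by move=> kN; have := fg_pts (Ordinal (ltnW kN : (k < N.+1)%N)); rewrite /pts /= kN.
have fgx : nrm (f x - g x) <= d by have := fg_pts ord_max; rewrite /pts /= ltnn.
apply: le_trans (partial_mean_perturb n (ltW d0) fgk fgx) _.
by rewrite lerD ?gS // -splitr mul_div_add1_le ?(ltW e0).
Qed.

End MeanSublevel.


Section Transfer.
Variables (X : normedModType K) (A : nat -> nat -> R) (M : R) (xs : nat -> X) (x : X).
Hypothesis A_ge0 : forall n k, 0 <= A n k.
Hypothesis sumA_le : forall n N, \sum_(k < N) A n k <= M.
Variable B : set (X -> K).
Hypothesis genB : I_generates B.

Hypothesis Bsmall :
  forall g, B g -> eventually_small (mean A (fun k => nrm (g (xs k) - g x))).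

Lemma I_generates_approx_mean_sublevel (eps d : R) h :
  0 < eps -> 0 < d -> dual_ball X h ->
  exists m g, mean_sublevel A xs x m eps g /\ forall y, `|h y - g y| <= emb d * `|y|.
Proof.
move=> eps0 d0 hball.
pose Bm m := [set g | B g /\ forall n, (m <= n)%N ->
  (mean A (fun k => nrm (g (xs k) - g x)) n <= eps%:E)%E].
have BE : B = \bigcup_m Bm m.
  apply/seteqP; split=> [g Bg|g [m _ []//]].
  by have [m _ gm] := Bsmall Bg eps0; exists m.
have Bm_sublevel m : wstar_cconv_hull (Bm m) `<=` mean_sublevel A xs x m eps.
  apply: subset_trans (wstar_closure_mean_sublevel A_ge0 sumA_le (m := m) (eps := eps)).
  apply: wstar_closureS; apply: subset_trans (conv_hull_mean_sublevel A_ge0 (m := m) (eps := eps)).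
  apply: conv_hullS => g [_ gm] n mn N.
  by apply: psum_le_of_nneseriesEFin_le (gm n mn) => k; rewrite mulr_ge0 ?nrm_ge0.
have [_ hcl] : norm_closure (conv_hull (\bigcup_m wstar_cconv_hull (Bm m))) h.
  by rewrite -(genB BE).
have [g [gconv hg]] := hcl (emb d) (emb_gt0 d0).
have [m _ gm] : (\bigcup_m mean_sublevel A xs x m eps) g.
  apply: (conv_hull_bigcup_mean_sublevel A_ge0); apply: conv_hullS gconv.
  by move=> g' [m _ g'm]; exists m => //; apply: Bm_sublevel.
by exists m, g.
Qed.

Lemma mean_small_of_I_generates (L : R) :
  (forall k, nrm `|xs k| <= L) ->
  forall h, dual_ball X h -> eventually_small (mean A (fun k => nrm (h (xs k) - h x))).
Proof.
move=> xsL h hball e e0.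
set eps := e / 2; have eps0 : 0 < eps by rewrite divr_gt0.
set Lx := nrm `|x|; have L0 : 0 <= L := le_trans (nrm_ge0 _) (xsL 0).
have LLx0 : 0 <= L + Lx by rewrite addr_ge0 ?nrm_ge0.
have M0 : 0 <= M by rewrite (le_trans _ (sumA_le 0 0)) ?big_ord0.
set d := eps / ((L + Lx + 1) * (M + 1)).
have d0 : 0 < d by rewrite divr_gt0 ?mulr_gt0 ?ltr_wpDl.
have [m [g [gm hg]]] := I_generates_approx_mean_sublevel eps0 d0 hball.
have hg_nrm y : nrm (h y - g y) <= d * nrm `|y|.
  rewrite -(nrm_emb (ltW d0)) -nrmM nrm_le // normrM normr_id.
  by rewrite (gtr0_norm (emb_gt0 d0)) hg.
exists m => // n mn; apply: nneseriesEFin_le => [k|N]; first by rewrite mulr_ge0 ?nrm_ge0.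
have hgk k : (k < N)%N -> nrm (h (xs k) - g (xs k)) <= d * L.
  by move=> _; rewrite (le_trans (hg_nrm _)) // ler_wpM2l ?(ltW d0).
apply: le_trans (partial_mean_perturb A_ge0 sumA_le n (mulr_ge0 (ltW d0) L0) hgk (hg_nrm x)) _.
rewrite [e]splitr lerD ?gm // -mulrDr (@le_trans _ _ (d * (L + Lx + 1) * (M + 1))) //.
  apply: ler_pM; [exact: mulr_ge0 (ltW d0) LLx0 | exact: M0 | | by rewrite lerDl].
  by rewrite ler_wpM2l ?(ltW d0) // lerDl.
by rewrite /d -mulrA divfK // gt_eqF // mulr_gt0 ?ltr_wpDl.
Qed.

End Transfer.

Lemma stat_null_of_I_generates (X : normedModType K) (A : nat -> nat -> R) (M : R)
    (xs : nat -> X) (x : X) (B : set (X -> K)) (Mx : K) :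
  (forall n k, 0 <= A n k) -> (forall n N, \sum_(k < N) A n k <= M) ->
  I_generates B -> B `<=` dual_ball X -> (forall k, `|xs k| <= Mx) ->
  (forall g, B g -> stat_null A (fun k => nrm (g (xs k) - g x))) ->
  forall f, dual X f -> stat_null A (fun k => nrm (f (xs k) - f x)).
Proof.
move=> A_ge0 sumA_le genB Bball xsM Bnull f fd.
have Mx0 : 0 <= Mx := le_trans (normr_ge0 _) (xsM 0).
have xsL k : nrm `|xs k| <= nrm Mx by rewrite nrm_le // normr_id ger0_norm.
have [kap [kap0 fkap]] := dual_bounded fd.
have hball := dual_ball_scale fd kap0 fkap.
have -> : (fun k => nrm (f (xs k) - f x)) =
    (fun k => nrm kap * nrm (kap^-1 * f (xs k) - kap^-1 * f x)).
  by apply/funext => k; rewrite -nrmM mulrBr !mulrA mulfV ?gt_eqF // !mul1r.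
apply: stat_null_scale; first by rewrite nrm_gt0 ?gtr0_norm.
have [Lh hL] := dual_diff_bounded x hball.1 xsM.
apply/(mean_smallE A_ge0 sumA_le hL).
apply: (mean_small_of_I_generates A_ge0 sumA_le genB _ xsL hball) => g Bg.
have [Lg gL] := dual_diff_bounded x (Bball g Bg).1 xsM.
by apply/(mean_smallE A_ge0 sumA_le gL); exact: Bnull.
Qed.

Theorem dual_cvg_iff_I_generates (X : normedModType K) (A : nat -> nat -> R)
    (B : set (X -> K)) (p : nat -> R) (xs : nat -> X) (x : X) :
  positive_matrix A -> regular A -> B `<=` dual_ball X -> I_generates B ->
  (exists c : R, 0 < c /\ forall k, c <= p k) -> (exists C : R, forall k, p k <= C) ->
  (exists Mx : K, forall k, `|xs k| <= Mx) ->
  ((forall f, dual X f -> strong_Ap_cvg nrm A p (fun k => f (xs k)) (f x)) <->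
   (forall f, B f -> strong_Ap_cvg nrm A p (fun k => f (xs k)) (f x))) /\
  ((forall f, dual X f -> A_stat_cvg nrm A (fun k => f (xs k)) (f x)) <->
   (forall f, B f -> A_stat_cvg nrm A (fun k => f (xs k)) (f x))).
Proof.
move=> A0 regA Bball genB [c [c0 cp]] [C pC] [Mx xsM].
have [M sumA] := regular_row_sum_le A0 regA.
have pcC k : c <= p k <= C by rewrite cp pC.
have transfer := stat_null_of_I_generates A0 sumA genB Bball xsM.
have strongE f : dual X f -> strong_Ap_cvg nrm A p (fun k => f (xs k)) (f x) <->
    stat_null A (fun k => nrm (f (xs k) - f x)).
  by move=> fd; have [L fL] := dual_diff_bounded x fd xsM; exact: (strong_Ap_cvgE (s := fun k => f (xs k)) (l := f x) A0 sumA fL c0 pcC).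
split; split=> [Dcvg f /Bball [fd _]|Bcvg f fd]; try exact: Dcvg.
- apply/(strongE f fd); apply: transfer fd => g Bg.
  by apply/(strongE g (Bball g Bg).1); exact: Bcvg.
- apply/(A_stat_cvgE A0); apply: transfer fd => g Bg.
  by apply/(A_stat_cvgE A0); exact: Bcvg.
Qed.

End NormEmbedding.


Theorem corollary3p4 (R : realType) :
  (forall (X : completeNormedModType R) (A : nat -> nat -> R)
          (B : set (X -> R)) (p : nat -> R) (xs : nat -> X) (x : X),
    positive_matrix A -> regular A ->
    B `<=` dual_ball X -> I_generates B ->
    (exists c : R, 0 < c /\ forall k, c <= p k) ->
    (exists C : R, forall k, p k <= C) ->
    (exists M : R, forall k, `|xs k| <= M) ->
    ((forall f, dual X f ->
        strong_Ap_cvg (fun z : R => `|z|) A p (fun k => f (xs k)) (f x)) <->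
     (forall f, B f ->
        strong_Ap_cvg (fun z : R => `|z|) A p (fun k => f (xs k)) (f x)))
    /\
    ((forall f, dual X f ->
        A_stat_cvg (fun z : R => `|z|) A (fun k => f (xs k)) (f x)) <->
     (forall f, B f ->
        A_stat_cvg (fun z : R => `|z|) A (fun k => f (xs k)) (f x))))
  /\
  (forall (X : completeNormedModType R[i]) (A : nat -> nat -> R)
          (B : set (X -> R[i])) (p : nat -> R) (xs : nat -> X) (x : X),
    positive_matrix A -> regular A ->
    B `<=` dual_ball X -> I_generates B ->
    (exists c : R, 0 < c /\ forall k, c <= p k) ->
    (exists C : R, forall k, p k <= C) ->
    (exists M : R[i], forall k, `|xs k| <= M) ->
    ((forall f, dual X f ->
        strong_Ap_cvg (@ComplexField.Normc.normc R) A p (fun k => f (xs k)) (f x)) <->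
     (forall f, B f ->
        strong_Ap_cvg (@ComplexField.Normc.normc R) A p (fun k => f (xs k)) (f x)))
    /\
    ((forall f, dual X f ->
        A_stat_cvg (@ComplexField.Normc.normc R) A (fun k => f (xs k)) (f x)) <->
     (forall f, B f ->
        A_stat_cvg (@ComplexField.Normc.normc R) A (fun k => f (xs k)) (f x)))).
Proof.
split=> X A B p xs x.
  exact: (@dual_cvg_iff_I_generates R R idfun normr (fun _ _ => erefl) (fun _ => erefl)).
exact: (@dual_cvg_iff_I_generates R R[i] (@real_complex R) _ (@lecR R) (fun _ => erefl)).
Qed.
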